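(* Let $R$ be a uniform $L$-layered $1$-semifield$^\dagger$, let $a\in R$, and let $f=\sum_{i=0}^m \alpha_i^{[\ell_i]}\lambda^i\in R[\lambda]$ be $a$-primary. Then for $b\in R_k$ (i.e. $b$ of layer $k$), $$f(b)=\begin{cases} (b^m)^{[k^m]} & \text{if } b>_\nu a,\\ (a^m)^{[\sum_i \ell_i k^i]} & \text{if } b\cong_\nu a,\\ \alpha_0^{[\ell_0]} & \text{if } b<_\nu a.\end{cases}$$
   Context: Concretely, $R=R(L,\mathcal{G})$ where $L$ is a totally ordered semiring$^\dagger$ (semiring without necessarily a zero) and $\mathcal{G}$ a totally ordered abelian group: elements are written $x^{[\ell]}$ with $x\in\mathcal{G}$ the value and $\ell\in L$ the layer, with $x^{[k]}y^{[\ell]}=(xy)^{[k\ell]}$ and $x^{[k]}+y^{[\ell]}$ equal to $x^{[k]}$ if $x>y$, $y^{[\ell]}$ if $x<y$, $x^{[k+\ell]}$ if $x=y$; $R_k$ denotes the elements of layer $k$. In the claim, $(c)^{[\ell]}$ denotes the element whose $\mathcal{G}$-value is that of $c$ and whose layer is $\ell$. $x\cong_\nu y$ means equal $\mathcal{G}$-values, and $x<_\nu y$ means the $\mathcal{G}$-value of $x$ is smaller. A polynomial of degree $t$ is monic if its leading coefficient is $\nu$-equivalent to $\mathbb{1}_R$; a monic polynomial $f$ of degree $t$ is $a$-primary if $f=\lambda^t+\sum_j\alpha_j\lambda^{i_j}$ with $\alpha_j\cong_\nu a^{t-i_j}$ for all $j$. Polynomials are evaluated as functions $R\to R$. *)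

From HB Require Import structures.
From mathcomp Require Import all_boot all_order all_algebra.
Set Implicit Arguments. Unset Strict Implicit. Unset Printing Implicit Defensive.
Import GRing.Theory.
Local Open Scope ring_scope.

Definition tord_semiring (L : Type) (addL mulL : L -> L -> L) (oneL : L)
  (leL : L -> L -> bool) : Prop :=
  (forall x y z, addL x (addL y z) = addL (addL x y) z) /\
  (forall x y, addL x y = addL y x) /\
  (forall x y z, mulL x (mulL y z) = mulL (mulL x y) z) /\
  (forall x, mulL oneL x = x /\ mulL x oneL = x) /\
  (forall x y z, mulL x (addL y z) = addL (mulL x y) (mulL x z)
                 /\ mulL (addL y z) x = addL (mulL y x) (mulL z x)) /\
  (forall x, leL x x) /\ (forall x y, leL x y -> leL y x -> x = y) /\
  (forall x y z, leL x y -> leL y z -> leL x z) /\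
  (forall x y, leL x y || leL y x) /\
  (forall x y z, leL x y ->
     [/\ leL (addL x z) (addL y z), leL (addL z x) (addL z y),
         leL (mulL x z) (mulL y z) & leL (mulL z x) (mulL z y)]).

Definition tord_group (G : zmodType) (leG : rel G) : Prop :=
  [/\ (forall x, leG x x), (forall x y, leG x y -> leG y x -> x = y),
      (forall x y z, leG x y -> leG y z -> leG x z),
      (forall x y, leG x y || leG y x) &
      (forall x y z, leG x y -> leG (x + z) (y + z))].

Definition ltG (G : zmodType) (leG : rel G) (x y : G) : bool :=
  leG x y && (x != y).

(* The uniform layered 1-semifield R(L,G): an element x^[l] is the pair (x, l),
   with value x (in G) and layer l (in L). *)
Section Layered.
Variables (L : Type) (addL mulL : L -> L -> L) (oneL : L) (G : zmodType) (leG : rel G).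

Definition radd (x y : G * L) : G * L :=
  if ltG leG y.1 x.1 then x
  else if ltG leG x.1 y.1 then y
  else (x.1, addL x.2 y.2).

Definition rmul (x y : G * L) : G * L := (x.1 + y.1, mulL x.2 y.2).

Definition rone : G * L := (0, oneL).

Definition rpow (x : G * L) (n : nat) : G * L := iter n (rmul x) rone.

Definition powL (k : L) (n : nat) : L := iter n (mulL k) oneL.

(* sum F 0 + F 1 + ... + F n in R (R has no zero) *)
Fixpoint rsum (n : nat) (F : nat -> G * L) : G * L :=
  match n with 0 => F 0%N | n'.+1 => radd (rsum n' F) (F n) end.

Fixpoint Lsum (n : nat) (F : nat -> L) : L :=
  match n with 0 => F 0%N | n'.+1 => addL (Lsum n' F) (F n) end.

Definition peval (m : nat) (alpha : nat -> G * L) (b : G * L) : G * L :=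
  rsum m (fun i => rmul (alpha i) (rpow b i)).

(* f = \sum_{i=0}^m alpha_i lambda^i is a-primary: f = lambda^m + ..., i.e.
   leading coefficient 1_R, and alpha_i ~nu a^(m-i) for all i. *)
Definition a_primary (m : nat) (alpha : nat -> G * L) (a : G * L) : Prop :=
  alpha m = rone /\ forall i, (i <= m)%N -> (alpha i).1 = a.1 *+ (m - i).
End Layered.

From HB Require Import structures.
From mathcomp Require Import all_boot all_order all_algebra.
Local Open Scope ring_scope.
Import GRing.Theory.
Set Implicit Arguments. Unset Strict Implicit. Unset Printing Implicit Defensive.

(* The i-th term alpha_i b^i of an a-primary f has value (m - i) a + i b, so
   passing from term i to term i+1 trades one summand a for one summand b.
   Hence if b >_nu a the values strictly increase and the leading term wins,
   if b <_nu a they strictly decrease and the constant term wins, and if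
   b ~_nu a all terms have the same value, so their layers add up. *)

Section OrderedGroup.
Variables (G : zmodType) (leG : rel G).
Hypothesis HG : tord_group leG.

Lemma ltG_irr x : ~~ ltG leG x x.
Proof. by rewrite /ltG eqxx andbF. Qed.

Lemma ltG_asym x y : ltG leG x y -> ~~ ltG leG y x.
Proof.
case: HG => _ anti _ _ _ /andP[lexy neqxy]; apply/negP => /andP[leyx _].
by rewrite (anti _ _ lexy leyx) eqxx in neqxy.
Qed.

Lemma ltG_trans x y z : ltG leG x y -> ltG leG y z -> ltG leG x z.
Proof.
case: HG => _ anti tr _ _ /andP[lexy neqxy] /andP[leyz _].
rewrite /ltG (tr _ _ _ lexy leyz); apply/negP => /eqP exz; subst z.
by rewrite (anti _ _ lexy leyz) eqxx in neqxy.
Qed.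

Lemma ltG_add2l z x y : ltG leG x y -> ltG leG (z + x) (z + y).
Proof.
case: HG => _ _ _ _ leG_add /andP[lexy neqxy].
rewrite /ltG addrC (addrC z) leG_add //=; apply: contraNN neqxy => /eqP.
by move/addIr ->.
Qed.

Lemma ltG_decreasing_head n (x : nat -> G) :
  (forall i, (i < n)%N -> ltG leG (x i.+1) (x i)) ->
  forall j, (0 < j <= n)%N -> ltG leG (x j) (x 0%N).
Proof.
move=> dec; elim=> [//|[|j] IHj] /andP[_ ltjn]; first exact: dec.
exact: ltG_trans (dec _ ltjn) (IHj (ltnW ltjn)).
Qed.

End OrderedGroup.

Section LayeredSums.
Variables (L : Type) (addL mulL : L -> L -> L) (oneL : L) (G : zmodType) (leG : rel G).
Hypothesis HG : tord_group leG.

Lemma rsum_increasing n (F : nat -> G * L) :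
  (forall i, (i < n)%N -> ltG leG (F i).1 (F i.+1).1) ->
  rsum addL leG n F = F n.
Proof.
elim: n => [//|n IHn] inc /=.
rewrite IHn => [|i ltin]; last exact/inc/ltnW.
by rewrite /radd (negbTE (ltG_asym HG (inc n (ltnSn n)))) inc.
Qed.

Lemma rsum_head n (F : nat -> G * L) :
  (forall j, (0 < j <= n)%N -> ltG leG (F j).1 (F 0%N).1) ->
  rsum addL leG n F = F 0%N.
Proof.
elim: n => [//|n IHn] head /=.
rewrite IHn => [|j /andP[j_gt0 lejn]]; last by apply: head; rewrite j_gt0 leqW.
by rewrite /radd head // leqnn.
Qed.

Lemma rsum_const_value n (F : nat -> G * L) c :
  (forall i, (i <= n)%N -> (F i).1 = c) ->
  rsum addL leG n F = (c, Lsum addL n (fun i => (F i).2)).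
Proof.
elim: n => [|n IHn] val /=; first by rewrite -(val 0%N) //; case: (F 0%N).
rewrite IHn => [|i lein]; last exact/val/leqW.
by rewrite /radd /= val // (negbTE (ltG_irr leG c)).
Qed.

Lemma eq_Lsum n (F F' : nat -> L) :
  F =1 F' -> Lsum addL n F = Lsum addL n F'.
Proof. by move=> eqF; elim: n => [|n IHn] /=; rewrite eqF // IHn. Qed.

Lemma rpowE (b : G * L) i :
  rpow mulL oneL b i = (b.1 *+ i, powL mulL oneL b.2 i).
Proof.
by elim: i => [//|i IHi]; rewrite /rpow /= -/(rpow mulL oneL b i) IHi /rmul mulrS.
Qed.

End LayeredSums.

Section PrimaryEvaluation.
Variables (L : Type) (addL mulL : L -> L -> L) (oneL : L) (G : zmodType) (leG : rel G).
Hypothesis HG : tord_group leG.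
Hypothesis mul1L : forall l, mulL oneL l = l.
Hypothesis mulL1 : forall l, mulL l oneL = l.
Variables (a b : G * L) (m : nat) (alpha : nat -> G * L).
Hypothesis f_primary : a_primary oneL m alpha a.

Let term i := rmul mulL (alpha i) (rpow mulL oneL b i).

Lemma primary_term_value i : (i <= m)%N -> (term i).1 = a.1 *+ (m - i) + b.1 *+ i.
Proof. by case: f_primary => _ alphaE leim; rewrite /term rpowE /= alphaE. Qed.

Lemma primary_term_step i : (i < m)%N ->
  (term i).1 = a.1 *+ (m - i.+1) + b.1 *+ i + a.1 /\
  (term i.+1).1 = a.1 *+ (m - i.+1) + b.1 *+ i + b.1.
Proof.
move=> ltim; rewrite !primary_term_value ?(ltnW ltim) // -subnSK //.
rewrite mulrS mulrSr addrA; split=> //.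
by rewrite -addrA addrC.
Qed.

Lemma peval_primary_gt : ltG leG a.1 b.1 ->
  peval addL mulL oneL leG m alpha b = (b.1 *+ m, powL mulL oneL b.2 m).
Proof.
move=> ltab; rewrite /peval -/term (rsum_increasing _ HG) => [|i ltim]; last first.
  by case: (primary_term_step ltim) => -> ->; exact: (ltG_add2l HG _ ltab).
case: f_primary => alpham _.
by rewrite /term alpham rpowE /rmul /= add0r mul1L.
Qed.

Lemma peval_primary_eq : b.1 = a.1 ->
  peval addL mulL oneL leG m alpha b
  = (a.1 *+ m, Lsum addL m (fun i => mulL (alpha i).2 (powL mulL oneL b.2 i))).
Proof.
move=> eqba; rewrite /peval -/term (@rsum_const_value _ _ _ _ _ _ (a.1 *+ m)).
  by congr pair; apply: eq_Lsum => i; rewrite /term rpowE.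
by move=> i leim; rewrite primary_term_value // eqba -mulrnDr subnK.
Qed.

Lemma peval_primary_lt : ltG leG b.1 a.1 ->
  peval addL mulL oneL leG m alpha b = alpha 0%N.
Proof.
move=> ltba; rewrite /peval -/term rsum_head.
  by rewrite /term rpowE /rmul mulr0n addr0 mulL1; case: (alpha 0%N).
apply: (ltG_decreasing_head HG) => i ltim.
by case: (primary_term_step ltim) => -> ->; exact: (ltG_add2l HG _ ltba).
Qed.

End PrimaryEvaluation.

Theorem proposition7p16 (L : Type) (addL mulL : L -> L -> L) (oneL : L)
  (leL : L -> L -> bool) (HL : tord_semiring addL mulL oneL leL)
  (G : zmodType) (leG : rel G) (HG : tord_group leG)
  (a : G * L) (m : nat) (alpha : nat -> G * L)
  (Hf : a_primary oneL m alpha a)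
  (k : L) (b : G * L) (Hb : b.2 = k) :
  [/\ ltG leG a.1 b.1 ->
        peval addL mulL oneL leG m alpha b = (b.1 *+ m, powL mulL oneL k m),
      b.1 = a.1 ->
        peval addL mulL oneL leG m alpha b
        = (a.1 *+ m, Lsum addL m (fun i => mulL (alpha i).2 (powL mulL oneL k i))) &
      ltG leG b.1 a.1 ->
        peval addL mulL oneL leG m alpha b = alpha 0%N].
Proof.
case: HL => _ [_ [_ [mul1 _]]].
have mul1L l : mulL oneL l = l by case: (mul1 l).
have mulL1 l : mulL l oneL = l by case: (mul1 l).
rewrite -Hb; split.
- exact: peval_primary_gt.
- exact: peval_primary_eq.
- exact: peval_primary_lt.
Qed.
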